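(* Let $X$ be a vector lattice and let $l : X \to \mathbb{R}$ be an order bounded linear functional. Then $\ker(l)$ is a Grothendieck subspace of $X$ if and only if $\ker(|l|)$ is a Grothendieck subspace of $X$, where $|l|$ is the modulus of $l$.
   Context: The modulus of an order bounded functional $l$ is $|l| = l \vee (-l)$ in the Riesz space of order bounded functionals. A linear subspace $H$ of a vector lattice is called a Grothendieck subspace (or $G$-space) if for all $x, y \in H$ one has $x \vee y \vee 0 + x \wedge y \wedge 0 \in H$. *)

From HB Require Import structures.
From mathcomp Require Import all_boot all_order all_algebra.
From mathcomp Require Import reals.
Set Implicit Arguments. Unset Strict Implicit. Unset Printing Implicit Defensive.
Import Order.TTheory GRing.Theory Num.Theory.
Local Open Scope ring_scope.

Record vectorLattice (R : realType) (X : lmodType R) := VectorLattice {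
  vle : X -> X -> Prop;
  vjoin : X -> X -> X;
  vmeet : X -> X -> X;
  vle_refl : forall x, vle x x;
  vle_anti : forall x y, vle x y -> vle y x -> x = y;
  vle_trans : forall x y z, vle x y -> vle y z -> vle x z;
  vle_add : forall x y z, vle x y -> vle (x + z) (y + z);
  vle_scale : forall (a : R) x y, 0 <= a -> vle x y -> vle (a *: x) (a *: y);
  vjoin_ub_l : forall x y, vle x (vjoin x y);
  vjoin_ub_r : forall x y, vle y (vjoin x y);
  vjoin_least : forall x y z, vle x z -> vle y z -> vle (vjoin x y) z;
  vmeet_lb_l : forall x y, vle (vmeet x y) x;
  vmeet_lb_r : forall x y, vle (vmeet x y) y;
  vmeet_greatest : forall x y z, vle z x -> vle z y -> vle z (vmeet x y);
}.

Section Defs.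
Variables (R : realType) (X : lmodType R) (V : vectorLattice X).

Definition linear_functional (f : X -> R) : Prop :=
  forall (a : R) (x y : X), f (a *: x + y) = a * f x + f y.

Definition order_bounded (f : X -> R) : Prop :=
  forall a b : X, exists M : R,
    forall x, vle V a x -> vle V x b -> `|f x| <= M.

(* the order of the space of order bounded functionals: f <= g iff g - f is positive *)
Definition func_le (f g : X -> R) : Prop :=
  forall x, vle V 0 x -> f x <= g x.

(* m = |l| = l \/ (-l), the supremum of l and -l in the ordered vector space
   of order bounded linear functionals *)
Definition is_modulus (l m : X -> R) : Prop :=
  [/\ linear_functional m, order_bounded m,
      func_le l m, func_le (fun x => - l x) m &
      forall m', linear_functional m' -> order_bounded m' ->
        func_le l m' -> func_le (fun x => - l x) m' -> func_le m m'].

Definition kernel (f : X -> R) : X -> Prop := fun x => f x = 0.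

Definition G_space (H : X -> Prop) : Prop :=
  (forall x y, H x -> H y -> forall a : R, H (a *: x + y)) /\ H 0 /\
  forall x y, H x -> H y ->
    H (vjoin V (vjoin V x y) 0 + vmeet V (vmeet V x y) 0).

End Defs.

From mathcomp Require Import all_boot all_order all_algebra.
From mathcomp Require Import boolp classical_sets reals.
From mathcomp Require Import ring lra.
Set Implicit Arguments. Unset Strict Implicit. Unset Printing Implicit Defensive.
Import Order.TTheory GRing.Theory Num.Theory.
Local Open Scope classical_set_scope.
Local Open Scope ring_scope.

(* Write m = |l|, l+ = (m + l)/2 and l- = (m - l)/2.  Extending
   u |-> sup {- l z | 0 ⊑ z ⊑ u} linearly from the positive cone gives a
   functional l + 2 l- dominating l and -l, so m is below it (Riesz-Kantorovich);
   hence l+ and l- are disjoint: every u ⊒ 0 splits as z + (u - z) with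
   l+ z + l- (u - z) arbitrarily small.  Reflecting x in its truncation p to
   [-z, z], i.e. x' = x - 2p, then exchanges l and m up to this error,
   simultaneously for x, y and x ⊔ y ⊔ 0 + x ⊓ y ⊓ 0, because that operation
   is Lipschitz for the order distance.  Finally, if the kernel of a linear f is
   closed under the operation, moving x and y into the kernel along a fixed e
   with f e <> 0 bounds f of the operation by a multiple of |f x| + |f y|; so
   the approximations carry closedness from ker l to ker m and back. *)

Lemma normr_le_scaled_eq0 (R : realFieldType) (r K : R) :
  (forall e, 0 < e -> `|r| <= K * e) -> r = 0.
Proof.
move=> small; apply/eqP; rewrite -normr_le0; apply/ler_addgt0Pr => e e0.
rewrite add0r; have [K_le0|K_gt0] := lerP K 0.
  apply: le_trans (small 1 ltr01) _; rewrite mulr1.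
  exact: le_trans K_le0 (ltW e0).
by have := small (e / K) (divr_gt0 e0 K_gt0); rewrite mulrC divfK ?gt_eqF.
Qed.

Section RieszSpace.
Variables (R : realType) (X : lmodType R) (V : vectorLattice X).

Local Notation "x ⊑ y" := (vle V x y) (at level 70, no associativity).
Local Notation "x ⊔ y" := (vjoin V x y) (at level 50, left associativity).
Local Notation "x ⊓ y" := (vmeet V x y) (at level 40, left associativity).

Lemma vleD2l z x y : x ⊑ y -> z + x ⊑ z + y.
Proof. by move=> h; rewrite ![z + _]addrC; apply: vle_add. Qed.

Lemma vleD a b c d : a ⊑ b -> c ⊑ d -> a + c ⊑ b + d.
Proof. by move=> hab hcd; apply: vle_trans (vle_add c hab) (vleD2l b hcd). Qed.

Lemma vaddr_ge0 x y : 0 ⊑ x -> 0 ⊑ y -> 0 ⊑ x + y.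
Proof. by move=> x0 y0; rewrite -[0]addr0; apply: vleD. Qed.

Lemma vle_wpDr e x y : 0 ⊑ e -> x ⊑ y -> x ⊑ y + e.
Proof. by move=> e0 h; rewrite -[x]addr0; apply: vleD. Qed.

Lemma vsubr_ge0 x y : 0 ⊑ y - x <-> x ⊑ y.
Proof.
split=> h; first by have := vle_add x h; rewrite add0r subrK.
by have := vle_add (- x) h; rewrite subrr.
Qed.

Lemma vleBlDr x y z : x - z ⊑ y <-> x ⊑ y + z.
Proof.
split=> h; first by have := vle_add z h; rewrite subrK.
by have := vle_add (- z) h; rewrite addrK.
Qed.

Lemma vleN x y : x ⊑ y -> - y ⊑ - x.
Proof. by move/vsubr_ge0 => h; apply/vsubr_ge0; rewrite opprK addrC. Qed.

Lemma vscaler_ge0 (a : R) x : 0 <= a -> 0 ⊑ x -> 0 ⊑ a *: x.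
Proof. by move=> a0 x0; have := vle_scale a0 x0; rewrite scaler0. Qed.

Lemma voppJ a b : - (a ⊔ b) = - a ⊓ - b.
Proof.
apply: vle_anti.
  by apply: vmeet_greatest; apply: vleN; [apply: vjoin_ub_l | apply: vjoin_ub_r].
rewrite -[_ ⊓ _]opprK; apply: vleN; apply: vjoin_least.
  by rewrite -[a]opprK; apply: vleN; rewrite opprK; apply: vmeet_lb_l.
by rewrite -[b]opprK; apply: vleN; rewrite opprK; apply: vmeet_lb_r.
Qed.

Lemma voppM a b : - (a ⊓ b) = - a ⊔ - b.
Proof. by rewrite -[a]opprK -[b]opprK -voppJ !opprK. Qed.

Definition vabs x := x ⊔ - x.

(* [vclose d a b] encodes |a - b| ⊑ d without forming |a - b|. *)
Definition vclose d a b := a ⊑ b + d /\ b ⊑ a + d.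

Lemma vclose_sym d a b : vclose d a b -> vclose d b a.
Proof. by case. Qed.

Lemma vclose_refl a : vclose 0 a a.
Proof. by rewrite /vclose addr0; split; apply: vle_refl. Qed.

Lemma vclose_ge0 d a b : vclose d a b -> 0 ⊑ d.
Proof.
case=> hab hba; have := vleD hab hba.
rewrite addrACA [b + a]addrC -vsubr_ge0 addrC addrK -mulr2n -scaler_nat.
have half_ge0 : 0 <= 2^-1 :> R by rewrite invr_ge0 ler0n.
by move/(vle_scale half_ge0); rewrite scaler0 scalerA mulVf ?scale1r ?pnatr_eq0.
Qed.

Lemma vcloseD d d' a b a' b' : vclose d a b -> vclose d' a' b' ->
  vclose (d + d') (a + a') (b + b').
Proof. by case=> h1 h2 [h1' h2']; split; rewrite addrACA; apply: vleD. Qed.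

Lemma vcloseN d a b : vclose d a b -> vclose d (- a) (- b).
Proof.
by case=> h1 h2; split; apply/vleBlDr; rewrite -opprD; apply: vleN.
Qed.

Lemma vclose_le d d' a b : d ⊑ d' -> vclose d a b -> vclose d' a b.
Proof. by move=> dd' [h1 h2]; split; apply: vle_trans (vleD2l _ dd'). Qed.

Lemma vcloseZ (c : R) d a b : 0 <= c -> vclose d a b ->
  vclose (c *: d) (c *: a) (c *: b).
Proof. by move=> c0 [h1 h2]; split; rewrite -scalerDr; apply: vle_scale. Qed.

Lemma vclose_join_le d d' a b a' b' : vclose d a a' -> vclose d' b b' ->
  a ⊔ b ⊑ a' ⊔ b' + (d + d').
Proof.
move=> ha hb; have [d0 d'0] := (vclose_ge0 ha, vclose_ge0 hb).
case: ha hb => [ha _] [hb _]; apply: vjoin_least.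
  rewrite addrA; apply: vle_wpDr d'0 _.
  exact: vle_trans ha (vle_add _ (vjoin_ub_l _ _ _)).
rewrite (addrC d) addrA; apply: vle_wpDr d0 _.
exact: vle_trans hb (vle_add _ (vjoin_ub_r _ _ _)).
Qed.

Lemma vcloseJ d d' a b a' b' : vclose d a a' -> vclose d' b b' ->
  vclose (d + d') (a ⊔ b) (a' ⊔ b').
Proof.
by move=> ha hb; split; apply: vclose_join_le => //; apply: vclose_sym.
Qed.

Lemma vcloseM d d' a b a' b' : vclose d a a' -> vclose d' b b' ->
  vclose (d + d') (a ⊓ b) (a' ⊓ b').
Proof.
move=> /vcloseN ha /vcloseN hb; have := vcloseN (vcloseJ ha hb).
by rewrite !voppJ !opprK.
Qed.

Lemma vabs_close x : vclose (vabs x) x 0.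
Proof.
split; first by rewrite add0r; apply: vjoin_ub_l.
by have := vle_add x (vjoin_ub_r V x (- x)); rewrite addNr addrC.
Qed.

Lemma vabs_ge0 x : 0 ⊑ vabs x.
Proof. exact: vclose_ge0 (vabs_close x). Qed.

Lemma vabs_subr_ge0 x : 0 ⊑ vabs x - x.
Proof. exact/vsubr_ge0/vjoin_ub_l. Qed.

Lemma vclose_scale_norm (c : R) e : vclose (`|c| *: vabs e) (c *: e) 0.
Proof.
have [c0|c0] := leP 0 c.
  by rewrite ger0_norm //; have := vcloseZ c0 (vabs_close e); rewrite scaler0.
have nc0 : 0 <= - c by rewrite oppr_ge0 ltW.
have := vcloseZ nc0 (vcloseN (vabs_close e)).
by rewrite ltr0_norm // oppr0 scaler0 scalerN [- c *: e]scaleNr opprK.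
Qed.

Definition gop x y := (x ⊔ y ⊔ 0) + (x ⊓ y ⊓ 0).

Lemma vclose_gop d d' a b a' b' : vclose d a a' -> vclose d' b b' ->
  vclose ((d + d') + (d + d')) (gop a b) (gop a' b').
Proof.
move=> ha hb; apply: vcloseD.
  by rewrite -[d + d']addr0; apply: vcloseJ (vcloseJ ha hb) (vclose_refl 0).
by rewrite -[d + d']addr0; apply: vcloseM (vcloseM ha hb) (vclose_refl 0).
Qed.

Lemma gopN a b : gop (- a) (- b) = - gop a b.
Proof. by rewrite /gop opprD voppJ voppM !voppJ !voppM oppr0 addrC. Qed.

Definition vclamp z w := (w ⊓ z) ⊔ - z.

Lemma vclamp_close u z w : 0 ⊑ z -> z ⊑ u -> vclose u w 0 ->
  vclose z (vclamp z w) 0 /\ vclose (u - z) w (vclamp z w).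
Proof.
move=> z0 zu [wu w_u]; rewrite add0r in wu.
have nzz : - z ⊑ z by apply: (vle_trans _ z0); have := vleN z0; rewrite oppr0.
have uz0 : 0 ⊑ u - z by apply/vsubr_ge0.
split; split.
- by rewrite add0r; apply: vjoin_least => //; apply: vmeet_lb_r.
- by have := vle_add z (vjoin_ub_r V (w ⊓ z) (- z)); rewrite addNr.
- apply/vleBlDr; apply: vle_trans (vjoin_ub_l _ _ _); apply: vmeet_greatest.
    by apply/vleBlDr; apply: vle_wpDr uz0 (vle_refl _ _).
  by apply/vleBlDr; rewrite addrC subrK.
- apply: vjoin_least.
    exact: vle_trans (vmeet_lb_l _ _ _) (vle_wpDr uz0 (vle_refl _ _)).
  by have := vle_add (- z) w_u; rewrite add0r addrA.
Qed.

Lemma vclose_reflect z d w p : vclose z p 0 -> vclose d w p ->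
  vclose (z + z) (w - p - p) w /\ vclose d (w - p - p) (- p).
Proof.
move=> /vcloseN pz wp; split.
  have := vcloseD (vcloseD (vclose_refl w) pz) pz.
  by rewrite oppr0 !addr0 !add0r.
have := vcloseD (vcloseD wp (vclose_refl (- p))) (vclose_refl (- p)).
by rewrite subrr add0r !addr0.
Qed.

Lemma riesz_decomposition z u v : 0 ⊑ u -> 0 ⊑ v -> 0 ⊑ z -> z ⊑ u + v ->
  [/\ 0 ⊑ z ⊓ u, z ⊓ u ⊑ u, 0 ⊑ z - z ⊓ u & z - z ⊓ u ⊑ v].
Proof.
move=> u0 v0 z0 zuv; split; [exact: vmeet_greatest | exact: vmeet_lb_r | |].
  exact/vsubr_ge0/vmeet_lb_l.
apply/vleBlDr; rewrite addrC -vleBlDr; apply: vmeet_greatest.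
  by apply/vleBlDr; apply: vle_wpDr v0 (vle_refl _ _).
exact/vleBlDr.
Qed.

Lemma order_boundedD f g : order_bounded V f -> order_bounded V g ->
  order_bounded V (fun x => f x + g x).
Proof.
move=> fb gb a b; have [[M fM] [N gN]] := (fb a b, gb a b).
exists (M + N) => x ax xb; apply: le_trans (ler_normD _ _) _.
exact: lerD (fM x ax xb) (gN x ax xb).
Qed.

Lemma order_bounded_monotone f : (forall x y, x ⊑ y -> f x <= f y) ->
  order_bounded V f.
Proof.
move=> f_mono a b; exists (`|f a| + `|f b|) => x /f_mono ax /f_mono xb.
have := ler_norm (- f a); have := ler_norm (f b); rewrite normrN.
have := normr_ge0 (f a); have := normr_ge0 (f b).
by rewrite ler_norml => *; apply/andP; split; lra.
Qed.

Definition gop_closed (f : X -> R) :=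
  forall x y, f x = 0 -> f y = 0 -> f (gop x y) = 0.

Section LinearFunctional.
Variable f : X -> R.
Hypothesis f_lin : linear_functional f.

Lemma lfunD x y : f (x + y) = f x + f y.
Proof. by rewrite -[x in LHS]scale1r f_lin mul1r. Qed.

Lemma lfun0 : f 0 = 0.
Proof. by apply: (addrI (f 0)); rewrite -lfunD !addr0. Qed.

Lemma lfunZ a x : f (a *: x) = a * f x.
Proof. by rewrite -[_ *: _]addr0 f_lin lfun0 addr0. Qed.

Lemma lfunN x : f (- x) = - f x.
Proof. by rewrite -scaleN1r lfunZ mulN1r. Qed.

Lemma lfunB x y : f (x - y) = f x - f y.
Proof. by rewrite lfunD lfunN. Qed.

Lemma G_space_kernelP : G_space V (kernel f) <-> gop_closed f.
Proof.
split=> [[_ [_ G]] //|G]; split; last by split; [exact: lfun0 | exact: G].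
by move=> x y fx fy a; rewrite /kernel f_lin fx fy mulr0 addr0.
Qed.

End LinearFunctional.

Definition gop_approximates (f g : X -> R) := forall x y e, 0 < e ->
  exists x' y', [/\ `|f x' - g x| <= e, `|f y' - g y| <= e &
                    `|f (gop x' y') - g (gop x y)| <= e].

Section KernelTransfer.
Variables f M : X -> R.
Hypotheses (f_lin : linear_functional f) (M_lin : linear_functional M).
Hypothesis f_lipschitz : forall d a b, vclose d a b -> `|f a - f b| <= M d.
Hypothesis f_gop : gop_closed f.

Lemma gop_kernel_bound : exists2 C, 0 <= C &
  forall x y, `|f (gop x y)| <= C * (`|f x| + `|f y|).
Proof.
have [[e fe0]|f0] := pselect (exists e, f e != 0); last first.
  exists 0 => // x y; suff -> : f (gop x y) = 0 by rewrite normr0 mul0r.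
  by apply: contra_notP f0 => fxy; exists (gop x y); apply/eqP.
set K := M (vabs e).
have K0 : 0 <= K := le_trans (normr_ge0 _) (f_lipschitz (vabs_close e)).
exists (2 * K / `|f e|) => [|x y]; first by rewrite divr_ge0 ?mulr_ge0.
have to_kernel w : vclose (`|f w / f e| *: vabs e) (w - (f w / f e) *: e) w.
  by have := vcloseD (vclose_refl w) (vcloseN (vclose_scale_norm (f w / f e) e));
    rewrite oppr0 add0r addr0.
have in_kernel w : f (w - (f w / f e) *: e) = 0.
  by rewrite lfunB // lfunZ // divfK // subrr.
have := f_lipschitz (vclose_gop (to_kernel x) (to_kernel y)).
rewrite f_gop ?in_kernel // sub0r normrN !lfunD // !lfunZ // -/K !normrM normfV.
by move=> bound; apply: le_trans bound _; lra.
Qed.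

Lemma gop_closed_approx g : gop_approximates f g -> gop_closed g.
Proof.
move=> approx x y gx gy; have [C C0 bound] := gop_kernel_bound.
apply: (@normr_le_scaled_eq0 _ _ (1 + 2 * C)) => e e0.
have [x' [y' []]] := approx x y e e0; rewrite gx gy !subr0 => x'e y'e.
have := bound x' y'; have := ler_wpM2l C0 (lerD x'e y'e).
by rewrite !ler_norml => ? /andP[? ?] /andP[? ?]; apply/andP; split; nra.
Qed.

End KernelTransfer.

Section ConeExtension.
Variable s : X -> R.
Hypothesis sD : forall u v, 0 ⊑ u -> 0 ⊑ v -> s (u + v) = s u + s v.
Hypothesis sZ : forall a u, 0 <= a -> 0 ⊑ u -> s (a *: u) = a * s u.

Definition cone_ext x := s (vabs x) - s (vabs x - x).

Lemma cone_extB a b : 0 ⊑ a -> 0 ⊑ b -> cone_ext (a - b) = s a - s b.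
Proof.
move=> a0 b0; rewrite /cone_ext; set p := vabs (a - b).
have p0 : 0 ⊑ p := vabs_ge0 _; have q0 : 0 ⊑ p - (a - b) := vabs_subr_ge0 _.
have splitting : p + b = (p - (a - b)) + a by rewrite opprB addrA subrK.
by have := sD p0 b0; rewrite splitting sD //; lra.
Qed.

Lemma cone_extE u : 0 ⊑ u -> cone_ext u = s u.
Proof.
move=> u0; have s0 : s 0 = 0.
  by rewrite -(scale0r 0) sZ ?mul0r //; apply: vle_refl.
by rewrite -[u]subr0 cone_extB ?s0 ?subr0 //; apply: vle_refl.
Qed.

Lemma cone_ext_linear : linear_functional cone_ext.
Proof.
have decomp x : exists p q, [/\ 0 ⊑ p, 0 ⊑ q & x = p - q].
  by exists (vabs x), (vabs x - x); rewrite opprB addrCA subrr addr0; split;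
    [exact: vabs_ge0 | exact: vabs_subr_ge0 |].
have comb b p q p' q' : 0 <= b -> 0 ⊑ p -> 0 ⊑ q -> 0 ⊑ p' -> 0 ⊑ q' ->
    cone_ext ((b *: p + p') - (b *: q + q')) = b * (s p - s q) + (s p' - s q').
  move=> b0 p0 q0 p'0 q'0.
  have [bp bq] := (vscaler_ge0 b0 p0, vscaler_ge0 b0 q0).
  have [bpp' bqq'] := (vaddr_ge0 bp p'0, vaddr_ge0 bq q'0).
  by rewrite cone_extB ?sD ?sZ //; ring.
move=> a x y; have [p [q [p0 q0 ->]]] := decomp x.
have [p' [q' [p'0 q'0 ->]]] := decomp y.
rewrite !cone_extB //; have [a0|a0] := leP 0 a.
  by rewrite -comb // scalerBr opprD addrACA.
have na0 : 0 <= - a by rewrite oppr_ge0 ltW.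
have -> : a * (s p - s q) = - a * (s q - s p) by ring.
rewrite -comb //; congr cone_ext.
by rewrite scalerBr !scaleNr opprD opprK [RHS]addrACA [- _ + a *: p]addrC.
Qed.

Lemma cone_ext_le x y : (forall u, 0 ⊑ u -> 0 <= s u) -> x ⊑ y ->
  cone_ext x <= cone_ext y.
Proof.
move=> s_ge0 /vsubr_ge0 yx.
by rewrite -subr_ge0 -(lfunB cone_ext_linear) cone_extE //; apply: s_ge0.
Qed.

End ConeExtension.

Section NegativePart.
Variable l : X -> R.
Hypotheses (l_lin : linear_functional l) (l_bd : order_bounded V l).

Definition negpart u := sup [set - l z | z in [set z | 0 ⊑ z /\ z ⊑ u]].

Lemma negpart_has_sup u : 0 ⊑ u ->
  has_sup [set - l z | z in [set z | 0 ⊑ z /\ z ⊑ u]].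
Proof.
move=> u0; split; first by exists (- l 0), 0; split => //; apply: vle_refl.
have [M lM] := l_bd 0 u; exists M => _ [z [z0 zu] <-].
by have := lM z z0 zu; rewrite ler_norml lerNl => /andP[].
Qed.

Lemma negpart_ub u z : 0 ⊑ z -> z ⊑ u -> - l z <= negpart u.
Proof.
move=> z0 zu; apply: sup_upper_bound; first exact/negpart_has_sup/(vle_trans z0).
by exists z.
Qed.

Lemma negpart_least u c : 0 ⊑ u ->
  (forall z, 0 ⊑ z -> z ⊑ u -> - l z <= c) -> negpart u <= c.
Proof.
move=> u0 ub; apply: ge_sup; first by case: (negpart_has_sup u0).
by move=> _ [z [z0 zu] <-]; apply: ub.
Qed.

Lemma negpart_approx u e : 0 ⊑ u -> 0 < e ->
  exists z, [/\ 0 ⊑ z, z ⊑ u & negpart u - e < - l z].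
Proof.
move=> u0 e0; have [_ [z [z0 zu] <-]] := sup_adherent e0 (negpart_has_sup u0).
by exists z.
Qed.

Lemma negpart_ge0 u : 0 ⊑ u -> 0 <= negpart u.
Proof.
by move=> u0; have := negpart_ub (vle_refl V 0) u0; rewrite lfun0 // oppr0.
Qed.

Lemma negpartD u v : 0 ⊑ u -> 0 ⊑ v ->
  negpart (u + v) = negpart u + negpart v.
Proof.
move=> u0 v0; have uv0 := vaddr_ge0 u0 v0.
apply/eqP; rewrite eq_le; apply/andP; split.
  apply: negpart_least => // z z0 zuv.
  have [z1_0 z1u z2_0 z2v] := riesz_decomposition u0 v0 z0 zuv.
  have := negpart_ub z1_0 z1u; have := negpart_ub z2_0 z2v.
  by rewrite lfunB //; lra.
rewrite -lerBrDr; apply: negpart_least => // z1 z1_0 z1u.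
rewrite lerBrDl -lerBrDr; apply: negpart_least => // z2 z2_0 z2v.
have := negpart_ub (vaddr_ge0 z1_0 z2_0) (vleD z1u z2v); rewrite lfunD //; lra.
Qed.

Lemma negpartZ_le a u : 0 < a -> 0 ⊑ u -> negpart (a *: u) <= a * negpart u.
Proof.
move=> a0 u0; apply: negpart_least => [|z z0 zau].
  exact: vscaler_ge0 (ltW a0) u0.
have ia0 : 0 <= a^-1 by rewrite invr_ge0 ltW.
have zu : a^-1 *: z ⊑ u.
  by have := vle_scale ia0 zau; rewrite scalerA mulVf ?gt_eqF ?scale1r.
have -> : - l z = a * - (a^-1 * l z) by rewrite mulrN mulrA mulfV ?gt_eqF ?mul1r.
by rewrite ler_pM2l // -lfunZ //; apply: negpart_ub zu; apply: vscaler_ge0.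
Qed.

Lemma negpartZ a u : 0 <= a -> 0 ⊑ u -> negpart (a *: u) = a * negpart u.
Proof.
move=> a0 u0; have [->|a_neq0] := eqVneq a 0.
  rewrite scale0r mul0r; apply/eqP; rewrite eq_le negpart_ge0 ?andbT.
    by apply: negpart_least => [|z z0 z_le0]; first exact: vle_refl;
      rewrite (vle_anti z_le0 z0) lfun0 // oppr0.
  exact: vle_refl.
have {a0 a_neq0}a0 : 0 < a by rewrite lt0r a_neq0.
apply/eqP; rewrite eq_le negpartZ_le //=.
have ia0 : 0 < a^-1 by rewrite invr_gt0.
have := negpartZ_le ia0 (vscaler_ge0 (ltW a0) u0).
rewrite scalerA mulVf ?gt_eqF // scale1r -(ler_pM2l a0).
by rewrite mulrA mulfV ?gt_eqF ?mul1r.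
Qed.

End NegativePart.

Section Modulus.
Variables l m : X -> R.
Hypotheses (l_lin : linear_functional l) (l_bd : order_bounded V l).
Hypothesis l_mod : is_modulus V l m.

Let m_lin : linear_functional m. Proof. by case: l_mod. Qed.

Lemma modulus_ge_norm x : 0 ⊑ x -> `|l x| <= m x.
Proof.
move=> x0; case: l_mod => _ _ /(_ x x0) lm /(_ x x0) nlm _.
by rewrite ler_norml lm lerNl nlm.
Qed.

Lemma modulus_le_negpart u : 0 ⊑ u -> m u <= l u + 2 * negpart l u.
Proof.
move=> u0; pose S := cone_ext (negpart l).
have S_lin : linear_functional S.
  exact: cone_ext_linear (negpartD l_lin l_bd) (negpartZ l_lin l_bd).
have SE x : 0 ⊑ x -> S x = negpart l x.
  by rewrite /S; apply: cone_extE; [exact: negpartD | exact: negpartZ].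
have S_bd : order_bounded V S.
  apply: order_bounded_monotone => x y; apply: cone_ext_le.
  - exact: negpartD.
  - exact: negpartZ.
  - by move=> v v0; apply: negpart_ge0.
pose c x := l x + (S x + S x).
have c_lin : linear_functional c by move=> a x y; rewrite /c l_lin !S_lin; ring.
have c_bd : order_bounded V c.
  by apply: order_boundedD => //; apply: order_boundedD.
have l_c : func_le V l c.
  by move=> x x0; rewrite /c SE //; have := negpart_ge0 l_lin l_bd x0; lra.
have nl_c : func_le V (fun x => - l x) c.
  move=> x x0; rewrite /c SE //.
  by have := negpart_ub l_bd x0 (vle_refl V x); lra.
case: l_mod => _ _ _ _ /(_ c c_lin c_bd l_c nl_c)/(_ u u0).
by rewrite /c SE //; lra.
Qed.

(* l+ = (m + l)/2 and l- = (m - l)/2 are disjoint: the infimum of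
   l+ z + l- (u - z) over 0 ⊑ z ⊑ u is 0. *)
Lemma modulus_disjoint u e : 0 ⊑ u -> 0 < e -> exists z, [/\ 0 ⊑ z, z ⊑ u &
  (m z + l z) + (m (u - z) - l (u - z)) <= e].
Proof.
move=> u0 e0; have e20 : 0 < e / 2 by rewrite divr_gt0.
have [z [z0 zu approx]] := negpart_approx l_bd u0 e20.
exists z; split => //; have := modulus_le_negpart u0.
by rewrite !lfunB //; lra.
Qed.

Lemma vclose_modulus d a b : vclose d a b ->
  `|(m a - m b) + (l a - l b)| <= m d + l d /\
  `|(m a - m b) - (l a - l b)| <= m d - l d.
Proof.
case=> /vsubr_ge0/modulus_ge_norm + /vsubr_ge0/modulus_ge_norm.
rewrite !lfunB // !lfunD // !ler_norml => /andP[? ?] /andP[? ?].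
by split; apply/andP; split; lra.
Qed.

Lemma modulus_lipschitz d a b : vclose d a b ->
  `|l a - l b| <= m d /\ `|m a - m b| <= m d.
Proof.
move/vclose_modulus; rewrite !ler_norml => -[/andP[? ?] /andP[? ?]].
by split; apply/andP; split; lra.
Qed.

Definition swap_approx e a a' := `|l a' - m a| <= e /\ `|m a' - l a| <= e.

(* m a - l a' = ((m + l)(a - a') + (m - l)(a + a')) / 2, and a + a' is the
   sum of a - P and a' - (- P). *)
Lemma vclose_swap D d a a' P : vclose (D + D) a' a -> vclose d a' (- P) ->
  vclose d a P -> swap_approx ((m D + l D) + (m d - l d)) a a'.
Proof.
move=> /vclose_modulus[h1 h2] /vclose_modulus[h3 h4] /vclose_modulus[h5 h6].
move: h1 h2 h3 h4 h5 h6; rewrite /swap_approx !lfunD // !lfunN // !ler_norml.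
move=> /andP[? ?] /andP[? ?] /andP[? ?] /andP[? ?] /andP[? ?] /andP[? ?].
by split; apply/andP; split; lra.
Qed.

Lemma swap_approx_le e e' a a' : e <= e' ->
  swap_approx e a a' -> swap_approx e' a a'.
Proof. by move=> ee' [h1 h2]; split; apply: le_trans ee'. Qed.

Lemma modulus_swap_approx x y e : 0 < e -> exists x' y', [/\ swap_approx e x x',
  swap_approx e y y' & swap_approx e (gop x y) (gop x' y')].
Proof.
move=> e0; have [u [xu yu]] : exists u, vclose u x 0 /\ vclose u y 0.
  exists (vabs x + vabs y); split.
    apply: vclose_le (vabs_close x).
    exact: vle_wpDr (vabs_ge0 y) (vle_refl _ _).
  apply: vclose_le (vabs_close y); rewrite addrC.
  exact: vle_wpDr (vabs_ge0 x) (vle_refl _ _).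
have u0 : 0 ⊑ u := vclose_ge0 xu; have e40 : 0 < e / 4 by rewrite divr_gt0.
have [z [z0 zu small]] := modulus_disjoint u0 e40.
have [px_z xpx] := vclamp_close z0 zu xu.
have [py_z ypy] := vclamp_close z0 zu yu.
have [x'x x'px] := vclose_reflect px_z xpx.
have [y'y y'py] := vclose_reflect py_z ypy.
exists (x - vclamp z x - vclamp z x), (y - vclamp z y - vclamp z y).
have := vclose_gop x'px y'py; rewrite gopN => g'P.
rewrite !lfunD // !lfunN // in small.
split; [apply: swap_approx_le (vclose_swap x'x x'px xpx)
       |apply: swap_approx_le (vclose_swap y'y y'py ypy)
       |apply: swap_approx_le
          (vclose_swap (vclose_gop x'x y'y) g'P (vclose_gop xpx ypy))].
all: by rewrite !lfunD // !lfunN //; lra.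
Qed.

Lemma modulus_gop_approximates : gop_approximates l m /\ gop_approximates m l.
Proof.
by split=> x y e /(modulus_swap_approx x y)[x' [y' [[? ?] [? ?] [? ?]]]];
  exists x', y'.
Qed.

End Modulus.

End RieszSpace.

Theorem lemma3 (R : realType) (X : lmodType R) (V : vectorLattice X)
  (l : X -> R) (hl : linear_functional l) (hb : order_bounded V l)
  (m : X -> R) (hm : is_modulus V l m) :
  G_space V (kernel l) <-> G_space V (kernel m).
Proof.
have m_lin : linear_functional m by case: hm.
have m_lipschitz := modulus_lipschitz hl hm.
have [lm_approx ml_approx] := modulus_gop_approximates hl hb hm.
rewrite (G_space_kernelP V hl) (G_space_kernelP V m_lin).
split=> [l_gop | m_gop].
  apply: (gop_closed_approx hl m_lin _ l_gop lm_approx).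
  by move=> d a b /m_lipschitz[].
apply: (gop_closed_approx m_lin m_lin _ m_gop ml_approx).
by move=> d a b /m_lipschitz[].
Qed.
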